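(* In the DID setting of the context with $N_1\ge1$ fixed, suppose Assumptions 1 and 2 hold. Consider testing $H_0:\alpha=\alpha_0$ at significance level $\tau$ by rejecting when $\widehat\alpha-\alpha_0$ is below the $\tau/2$-quantile or above the $1-\tau/2$-quantile of $\widehat F$. Then, as $N_0\to\infty$, this test is asymptotically of level $\tau$ (the limiting rejection probability under $H_0$ is at most $\tau$), for every $\tau\in(0,1)$.
   Context: Units $i\in\mathcal I_1$ (treated, $|\mathcal I_1|=N_1$) and $i\in\mathcal I_0$ (control, $|\mathcal I_0|=N_0$), periods $t=1,\dots,T$; $\mathcal T_0=\{1,\dots,t^\ast\}$, $\mathcal T_1=\{t^\ast+1,\dots,T\}$, $T$ fixed. Potential outcomes: $Y_{it}(0)=\theta_i+\gamma_t+\eta_{it}$, $Y_{it}(1)=\alpha_{it}+Y_{it}(0)$; observed $Y_{it}=Y_{it}(1)$ if $i\in\mathcal I_1,t\in\mathcal T_1$, else $Y_{it}(0)$. The $\alpha_{it}$ are fixed and $\alpha=\frac{1}{N_1}\frac{1}{T-t^\ast}\sum_{i\in\mathcal I_1}\sum_{t\in\mathcal T_1}\alpha_{it}$. For a sequence $A_t$, $\nabla A=\frac{1}{T-t^\ast}\sum_{t\in\mathcal T_1}A_t-\frac{1}{t^\ast}\sum_{t\in\mathcal T_0}A_t$; $W_i=\nabla\eta_{i\cdot}$. $\widehat\alpha=\frac{1}{N_1}\sum_{i\in\mathcal I_1}\nabla Y_i-\frac{1}{N_0}\sum_{i\in\mathcal I_0}\nabla Y_i$; control residuals $\widehat W_i=\nabla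 Y_i-\frac1{N_0}\sum_{j\in\mathcal I_0}\nabla Y_j$; $\widehat F(c)=N_0^{-1}\sum_{i\in\mathcal I_0}\mathbbm 1\{\widehat W_i\le c\}$. Treatment assignment is fixed. Assumption 1: (i) $\mathbb E[W_i]=0$ for all $i$; (ii) all $W_i$ have the same marginal distribution, with continuous cdf $F$ and finite second moment; (iii) as $N_0\to\infty$, $\frac1{N_0}\sum_{i\in\mathcal I_0}W_i\xrightarrow{p}0$ and $\frac1{N_0}\sum_{i\in\mathcal I_0}\mathbbm 1\{W_i\le c\}\xrightarrow{p}F(c)$ for each $c$. The errors of the treated units may be arbitrarily correlated with each other. Assumption 2: for every $\tau\in(0,1)$, letting $c_\tau$ denote the $\tau$-quantile of $F$ and $\widetilde W=N_1^{-1}\sum_{i\in\mathcal I_1}W_i$, one has $\Pr(\{\widetilde W\le c_{\tau/2}\}\cup\{\widetilde W>c_{1-\tau/2}\})\le\tau$. *)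

From HB Require Import structures.
From mathcomp Require Import all_boot all_order all_algebra.
From mathcomp Require Import all_classical all_reals all_analysis.
Set Implicit Arguments. Unset Strict Implicit. Unset Printing Implicit Defensive.
Import Order.TTheory GRing.Theory Num.Theory.
Local Open Scope ring_scope.

(* Periods are t : 'I_T (t = 0, ..., T-1); the pre-treatment periods are
   those with t < tstar (there are tstar of them) and the post-treatment
   periods those with tstar <= t (there are T - tstar of them). *)

Definition nabla {R : realType} (T tstar : nat) (A : 'I_T -> R) : R :=
  (T - tstar)%:R^-1 * (\sum_(t < T | (tstar <= t)%N) A t)
  - tstar%:R^-1 * (\sum_(t < T | (t < tstar)%N) A t).

(* Observed outcome of treated unit i at period t (Y_it(1) after tstar,
   Y_it(0) before), with Y_it(0) = theta_i + gamma_t + eta_it. *)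
Definition Ytreat {R : realType} {Omega : Type} (N1 T tstar : nat)
  (theta1 : 'I_N1 -> R) (gamma : 'I_T -> R) (alpha : 'I_N1 -> 'I_T -> R)
  (eta1 : 'I_N1 -> 'I_T -> Omega -> R) (i : 'I_N1) (t : 'I_T) (w : Omega) : R :=
  if (tstar <= t)%N then alpha i t + (theta1 i + gamma t + eta1 i t w)
  else theta1 i + gamma t + eta1 i t w.

(* Observed outcome of control unit i (controls are indexed by nat; the
   sample with N0 controls consists of units 0, ..., N0-1). *)
Definition Ycontrol {R : realType} {Omega : Type} (T : nat)
  (theta0 : nat -> R) (gamma : 'I_T -> R)
  (eta0 : nat -> 'I_T -> Omega -> R) (i : nat) (t : 'I_T) (w : Omega) : R :=
  theta0 i + gamma t + eta0 i t w.

Definition Wof {R : realType} {Omega : Type} (T tstar : nat)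
  (eta : 'I_T -> Omega -> R) (w : Omega) : R :=
  nabla tstar (fun t => eta t w).

Definition ATT {R : realType} (N1 T tstar : nat) (alpha : 'I_N1 -> 'I_T -> R) : R :=
  (N1%:R^-1 * (T - tstar)%:R^-1) *
  \sum_(i < N1) \sum_(t < T | (tstar <= t)%N) alpha i t.

Definition alpha_hat {R : realType} {Omega : Type} (N1 T tstar : nat)
  (theta1 : 'I_N1 -> R) (theta0 : nat -> R) (gamma : 'I_T -> R)
  (alpha : 'I_N1 -> 'I_T -> R)
  (eta1 : 'I_N1 -> 'I_T -> Omega -> R) (eta0 : nat -> 'I_T -> Omega -> R)
  (N0 : nat) (w : Omega) : R :=
  N1%:R^-1 * (\sum_(i < N1)
     nabla tstar (fun t => Ytreat tstar theta1 gamma alpha eta1 i t w))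
  - N0%:R^-1 * (\sum_(i < N0)
     nabla tstar (fun t => Ycontrol theta0 gamma eta0 i t w)).

Definition W_hat {R : realType} {Omega : Type} (T tstar : nat)
  (theta0 : nat -> R) (gamma : 'I_T -> R) (eta0 : nat -> 'I_T -> Omega -> R)
  (N0 : nat) (i : nat) (w : Omega) : R :=
  nabla tstar (fun t => Ycontrol theta0 gamma eta0 i t w)
  - N0%:R^-1 * (\sum_(j < N0)
     nabla tstar (fun t => Ycontrol theta0 gamma eta0 j t w)).

Definition F_hat {R : realType} {Omega : Type} (T tstar : nat)
  (theta0 : nat -> R) (gamma : 'I_T -> R) (eta0 : nat -> 'I_T -> Omega -> R)
  (N0 : nat) (w : Omega) (c : R) : R :=
  N0%:R^-1 * (\sum_(i < N0) ((W_hat tstar theta0 gamma eta0 N0 i w <= c)%R : nat)%:R).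

Definition quantile {R : realType} (G : R -> R) (p : R) : R :=
  inf [set c | p <= G c].

From HB Require Import structures.
From mathcomp Require Import all_boot all_order all_algebra.
From mathcomp Require Import all_classical all_reals all_analysis.
From mathcomp Require Import ring lra measurable_realfun.
Import Order.TTheory GRing.Theory Num.Theory.
Import numFieldNormedType.Exports.
Local Open Scope ring_scope.
Local Open Scope classical_set_scope.

(* Differencing (nabla) kills unit and time effects, so under H0
      alpha_hat - alpha0 = Wt - m and W_hat_i = W_i - m, where Wt is the
      treated average of the W_i and m the control average.  The common shift
      m cancels: the DID test is the "centred test" of Wt against the
      empirical cdf of the control W_i (DID_rejection_event).
   2. Empirical quantiles.  For continuous F (and the non-degeneracy forced by
      Assumption 2) we find cutoffs c1 <= q_F(tau'/2), c2 >= q_F(1-tau'/2)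
      with F c1 > tau/2 and F c2 < 1 - tau/2, for any tau < tau' < 1.
   4. Union bound.  The centred test can only reject when Wt is outside
      [q_F(tau'/2), q_F(1-tau'/2)] (probability <= tau' by Assumption 2) or
      when the control ecdf deviates from F at c1 or c2 (probability -> 0 by
      Assumption 1(iii)).  Choosing tau' = tau + e'/2 gives the theorem. *)

Section Nabla.
Variables (R : realType) (T tstar : nat).
Hypotheses (tstar_gt0 : (0 < tstar)%N) (tstar_ltT : (tstar < T)%N).

Lemma nablaD (f g : 'I_T -> R) :
  nabla tstar (fun t => f t + g t) = nabla tstar f + nabla tstar g.
Proof. by rewrite /nabla !big_split /=; ring. Qed.

Lemma nabla_const (c : R) : nabla tstar (fun _ : 'I_T => c) = 0.
Proof.
have post : \sum_(t < T | (tstar <= t)%N) c = c * (T - tstar)%:R.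
  rewrite (eq_bigl (fun t : 'I_T => predT t && (tstar <= t)%N)) //.
  by rewrite -(@big_geq_mkord _ _ _ tstar T predT (fun _ => c)) sumr_const_nat mulr_natr.
have pre : \sum_(t < T | (t < tstar)%N) c = c * tstar%:R.
  by rewrite -(big_ord_widen _ (fun _ => c) (ltnW tstar_ltT)) sumr_const card_ord mulr_natr.
have post_ne0 : (T - tstar)%:R != 0 :> R by rewrite pnatr_eq0 subn_eq0 -ltnNge.
have pre_ne0 : tstar%:R != 0 :> R by rewrite pnatr_eq0 -lt0n.
rewrite /nabla post pre mulrCA mulVf // mulr1.
by rewrite mulrCA mulVf // mulr1 subrr.
Qed.

Lemma nabla_post (f : 'I_T -> R) :
  nabla tstar (fun t => if (tstar <= t)%N then f t else 0) =
  (T - tstar)%:R^-1 * \sum_(t < T | (tstar <= t)%N) f t.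
Proof.
rewrite /nabla (big1 _ (fun t : 'I_T => (t < tstar)%N)) ?mulr0 ?subr0.
  by congr (_ * _); apply: eq_bigr => t ->.
by move=> t; rewrite ltnNge => /negbTE ->.
Qed.
End Nabla.

Section SampleMean.
Variables (R : realType) (n : nat).
Lemma mean_add (f g : 'I_n -> R) :
  n%:R^-1 * \sum_(i < n) (f i + g i) =
  n%:R^-1 * \sum_(i < n) f i + n%:R^-1 * \sum_(i < n) g i.
Proof. by rewrite big_split mulrDr. Qed.

Hypothesis n_gt0 : (0 < n)%N.

Lemma mean_const (c : R) : n%:R^-1 * \sum_(i < n) c = c.
Proof.
by rewrite sumr_const card_ord -[c *+ n]mulr_natl mulrA mulVf ?mul1r // pnatr_eq0 -lt0n.
Qed.
End SampleMean.
Arguments mean_add {R n} f g.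
Arguments mean_const {R n} n_gt0 c.

Section Decomposition.
Variables (R : realType) (Omega : Type) (N1 T tstar : nat).
Hypotheses (tstar_gt0 : (0 < tstar)%N) (tstar_ltT : (tstar < T)%N).
Variables (theta1 : 'I_N1 -> R) (theta0 : nat -> R) (gamma : 'I_T -> R)
  (alpha : 'I_N1 -> 'I_T -> R)
  (eta1 : 'I_N1 -> 'I_T -> Omega -> R) (eta0 : nat -> 'I_T -> Omega -> R).

Lemma nabla_Ytreat i w :
  nabla tstar (fun t => Ytreat tstar theta1 gamma alpha eta1 i t w) =
  (T - tstar)%:R^-1 * (\sum_(t < T | (tstar <= t)%N) alpha i t)
  + nabla tstar gamma + Wof tstar (eta1 i) w.
Proof.
have -> : (fun t => Ytreat tstar theta1 gamma alpha eta1 i t w) =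
    (fun t => (if (tstar <= t)%N then alpha i t else 0) +
              (theta1 i + (gamma t + eta1 i t w))).
  by apply: funext => t; rewrite /Ytreat; case: ifP; rewrite ?add0r !addrA.
by rewrite !nablaD nabla_post nabla_const // add0r addrA.
Qed.

Lemma nabla_Ycontrol i w :
  nabla tstar (fun t => Ycontrol theta0 gamma eta0 i t w) =
  nabla tstar gamma + Wof tstar (eta0 i) w.
Proof.
have -> : (fun t => Ycontrol theta0 gamma eta0 i t w) =
    (fun t => theta0 i + (gamma t + eta0 i t w)).
  by apply: funext => t; rewrite /Ycontrol addrA.
by rewrite !nablaD nabla_const // add0r.
Qed.

Lemma W_hat_centred N0 i w : (0 < N0)%N ->
  W_hat tstar theta0 gamma eta0 N0 i w =
  Wof tstar (eta0 i) w - N0%:R^-1 * \sum_(j < N0) Wof tstar (eta0 j) w.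
Proof.
move=> N0_gt0; rewrite /W_hat nabla_Ycontrol.
under eq_bigr do rewrite nabla_Ycontrol.
by rewrite mean_add mean_const // opprD addrACA subrr add0r.
Qed.

Lemma alpha_hat_error N0 w : (0 < N0)%N -> (0 < N1)%N ->
  alpha_hat tstar theta1 theta0 gamma alpha eta1 eta0 N0 w - ATT tstar alpha =
  N1%:R^-1 * (\sum_(i < N1) Wof tstar (eta1 i) w)
  - N0%:R^-1 * \sum_(j < N0) Wof tstar (eta0 j) w.
Proof.
move=> N0_gt0 N1_gt0; rewrite /alpha_hat /ATT.
under eq_bigr do rewrite nabla_Ytreat.
under [X in _ - N0%:R^-1 * X]eq_bigr do rewrite nabla_Ycontrol.
pose effect i := (T - tstar)%:R^-1 * \sum_(t < T | (tstar <= t)%N) alpha i t.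
set trend := nabla tstar gamma.
rewrite (mean_add (fun i => effect i + trend)) (mean_add effect).
rewrite (mean_add (fun=> trend)) !(mean_const N0_gt0, mean_const N1_gt0).
rewrite -mulrA [(T - tstar)%:R^-1 * _]mulr_sumr.
(* name the sums so that ring treats them as atoms *)
set E := \sum_(i < N1) effect i; set W1 := _ * \sum_(i < N1) Wof _ _ _.
set W0 := _ * \sum_(j < N0) Wof _ _ _.
by ring.
Qed.
End Decomposition.

Section EmpiricalCdf.
Variables (R : realType) (n : nat) (x : 'I_n -> R).

Definition ecdf (c : R) : R := n%:R^-1 * \sum_(i < n) ((x i <= c)%R : nat)%:R.

Lemma ecdf_le : {homo ecdf : c c' / c <= c'}.
Proof.
move=> c c' le_cc'; rewrite /ecdf ler_wpM2l ?invr_ge0 //.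
apply: ler_sum => i _; rewrite ler_nat.
by case: (boolP (x i <= c)) => // /le_trans ->.
Qed.

Lemma ecdf_gt0 c : 0 < ecdf c -> exists i, x i <= c.
Proof.
apply: contraPP => /forallNP none; rewrite /ecdf big1 ?mulr0 ?ltxx // => i _.
by case: (boolP (x i <= c)) => // /none.
Qed.

Let B := \sum_(i < n) `|x i|.

Let sample_bound i : - B <= x i <= B.
Proof. by rewrite -ler_norml /B (bigD1 i) //= lerDl sumr_ge0. Qed.

Hypothesis n_gt0 : (0 < n)%N.

Let ecdf_top : ecdf B = 1.
Proof.
rewrite /ecdf (eq_bigr (fun _ => 1)) => [|i _]; last by case/andP: (sample_bound i) => _ ->.
by rewrite sumr_const card_ord mulVf // pnatr_eq0 -lt0n.
Qed.

Variable p : R.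
Hypotheses (p_gt0 : 0 < p) (p_le1 : p <= 1).

Let ecdf_level_set_lbound : has_lbound [set c | p <= ecdf c].
Proof.
exists (- B) => c /= /(lt_le_trans p_gt0) /ecdf_gt0 [i le_xi_c].
by apply: le_trans le_xi_c; case/andP: (sample_bound i).
Qed.

Let ecdf_level_set_nonempty : [set c | p <= ecdf c] !=set0.
Proof. by exists B; rewrite /= ecdf_top. Qed.

Lemma quantile_ecdf_le c : p <= ecdf c -> quantile ecdf p <= c.
Proof. by move=> ?; apply: ge_inf; first exact: ecdf_level_set_lbound. Qed.

Lemma le_quantile_ecdf b : ecdf b < p -> b <= quantile ecdf p.
Proof.
move=> lt_b; apply: lb_le_inf; first exact: ecdf_level_set_nonempty.
move=> c /= le_c; rewrite leNgt; apply/negP => lt_cb.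
by have := le_lt_trans (le_trans le_c (ecdf_le _ _ (ltW lt_cb))) lt_b; rewrite ltxx.
Qed.

(* The empirical quantile is the smallest observation at which the ecdf
   reaches p; this finite description makes it measurable. *)
Lemma le_quantile_ecdfP a :
  a <= quantile ecdf p <-> (forall j, p <= ecdf (x j) -> a <= x j).
Proof.
split=> [le_a j /quantile_ecdf_le|le_a]; first exact: le_trans.
apply: lb_le_inf; first exact: ecdf_level_set_nonempty.
move=> c /= le_c; have [i le_xi_c] := ecdf_gt0 _ (lt_le_trans p_gt0 le_c).
have [j le_xj_c max_j] := @arg_maxP _ R _ i (fun j => x j <= c) x le_xi_c.
have {}max_j k : x k <= c -> x k <= x j := max_j k. (* in the ring order *)
apply: le_trans (le_a j _) le_xj_c; apply: (le_trans le_c).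
rewrite /ecdf ler_wpM2l ?invr_ge0 //; apply: ler_sum => k _; rewrite ler_nat.
by case: (boolP (x k <= c)) => // /max_j ->.
Qed.
End EmpiricalCdf.
Arguments ecdf {R n} x c.
Arguments quantile_ecdf_le {R n x p} p_gt0 {c}.
Arguments le_quantile_ecdf {R n x} n_gt0 {p} p_le1 {b}.
Arguments le_quantile_ecdfP {R n x} n_gt0 {p} p_gt0 p_le1 a.

Lemma ecdf_shift (R : realType) n (x : 'I_n -> R) (m c : R) :
  ecdf (fun i => x i - m) (c - m) = ecdf x c.
Proof. by rewrite /ecdf; under eq_bigr do rewrite lerD2r. Qed.
Arguments ecdf_shift {R n} x m c.

Section Measurability.
Variables (d : measure_display) (Omega : measurableType d) (R : realType).
Implicit Types f g : Omega -> R.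

Lemma measurable_le_set f g : measurable_fun setT f -> measurable_fun setT g ->
  measurable [set w | f w <= g w].
Proof. by move=> mf mg; rewrite -[X in measurable X]setTI; exact: measurable_fun_le. Qed.

Lemma measurable_lt_set f g : measurable_fun setT f -> measurable_fun setT g ->
  measurable [set w | f w < g w].
Proof.
move=> mf mg; rewrite (_ : [set w | _] = ~` [set w | g w <= f w]).
  exact/measurableC/measurable_le_set.
by apply/seteqP; split=> w /=; rewrite ltNge => /negP.
Qed.

Lemma measurable_ecdf n (X : 'I_n -> Omega -> R) c :
  (forall i, measurable_fun setT (X i)) -> measurable_fun setT c ->
  measurable_fun setT (fun w => ecdf (X ^~ w) (c w)).
Proof.
move=> mX mc; apply/measurable_funM/measurable_sum => [|i]; first exact: measurable_cst.
rewrite (_ : (fun w => _) = \1_[set w | X i w <= c w]).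
  exact/measurable_indic/measurable_le_set.
apply/funext => w; rewrite indicE.
by case: (boolP (X i w <= c w)) => h; [rewrite mem_set | rewrite memNset //=; exact/negP].
Qed.

Lemma measurable_filtered_sum n (P : pred 'I_n) (h : 'I_n -> Omega -> R) :
  (forall i, measurable_fun setT (h i)) ->
  measurable_fun setT (fun w => \sum_(i < n | P i) h i w).
Proof.
move=> mh; rewrite (_ : (fun w => _) =
  fun w => \sum_(i <- [seq i <- index_enum 'I_n | P i]) h i w).
  exact: measurable_sum.
by apply/funext => w; rewrite big_filter.
Qed.

Lemma measurable_sample_mean n (X : 'I_n -> Omega -> R) :
  (forall i, measurable_fun setT (X i)) ->
  measurable_fun setT (fun w => n%:R^-1 * \sum_(i < n) X i w).
Proof.
by move=> mX; apply: measurable_funM; [exact: measurable_cst | exact: measurable_sum].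
Qed.

Lemma measurable_Wof T tstar (eta : 'I_T -> Omega -> R) :
  (forall t, measurable_fun setT (eta t)) -> measurable_fun setT (Wof tstar eta).
Proof.
move=> meta; apply: measurable_funB; apply: measurable_funM;
  by [exact: measurable_cst | exact: measurable_filtered_sum].
Qed.

Lemma measurable_le_quantile n (X : 'I_n -> Omega -> R) (a : Omega -> R) (p : R) :
  (0 < n)%N -> 0 < p -> p <= 1 ->
  (forall i, measurable_fun setT (X i)) -> measurable_fun setT a ->
  measurable [set w | a w <= quantile (ecdf (X ^~ w)) p].
Proof.
move=> n_gt0 p_gt0 p_le1 mX ma.
rewrite (_ : [set w | _] = \bigcap_(j in [set: 'I_n])
    ([set w | ecdf (X ^~ w) (X j w) < p] `|` [set w | a w <= X j w])).
  apply: fin_bigcap_measurable => [|j _]; first exact: finite_finset.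
  apply: measurableU.
    by apply: measurable_lt_set (measurable_cst _); exact: measurable_ecdf.
  exact: measurable_le_set.
apply/seteqP; split=> w /=.
- move/(le_quantile_ecdfP n_gt0 p_gt0 p_le1) => le_a j _.
  by case: (ltP (ecdf (X ^~ w) (X j w)) p) => [|/le_a]; [left|right].
- move=> le_a; apply/(le_quantile_ecdfP n_gt0 p_gt0 p_le1) => j le_p.
  by case: (le_a j I) => [/=|//]; rewrite ltNge le_p.
Qed.
End Measurability.
Arguments measurable_sample_mean {d Omega R n X}.
Arguments measurable_Wof {d Omega R T} tstar {eta}.

Section PopulationQuantile.
Variables (R : realType) (F : R -> R).
Hypothesis F_cont : continuous F.

Lemma F_quantile p : [set c | p <= F c] !=set0 -> has_lbound [set c | p <= F c] ->
  F (quantile F p) = p.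
Proof.
move=> ne lb; set q := quantile F p.
apply/eqP; rewrite eq_le; apply/andP; split; rewrite leNgt; apply/negP => Fq.
- have [e /= e_gt0 near_q] := (nbhs_ballP _ _).1 (cvgr_gt _ (F_cont q) _ Fq).
  have /(ge_inf lb) : p <= F (q - e / 2).
    by apply/ltW/near_q; rewrite /ball /= opprB addrC subrK gtr0_norm; lra.
  by rewrite -/q; lra.
- have [e /= e_gt0 near_q] := (nbhs_ballP _ _).1 (cvgr_lt _ (F_cont q) _ Fq).
  have [s /= le_p_Fs lt_s] : exists2 s, p <= F s & s < q + e.
    by apply: inf_lt ne _; rewrite ltrDl.
  have le_qs : q <= s := ge_inf lb le_p_Fs.
  have : F s < p by apply: near_q; rewrite /ball /= distrC ger0_norm; lra.
  by rewrite ltNge le_p_Fs.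
Qed.

Variables (r p : R).
Hypotheses (r_lt_p : r < p) (p_lt_1p : p < 1 - p).
Hypothesis quantiles_ne : quantile F p <> quantile F (1 - p).

Let upper_level_sub : [set c | 1 - p <= F c] `<=` [set c | p <= F c].
Proof. by move=> c /= le_c; apply: le_trans le_c; exact: ltW. Qed.

Let below_of_unbounded q : ~ has_lbound [set c | p <= F c] ->
  exists2 c, p <= F c & c < q.
Proof.
move=> nlb; apply: contrapT => none; apply: nlb; exists q => c le_c.
by rewrite leNgt; apply/negP => lt_cq; apply: none; exists c.
Qed.

Lemma lower_cutoff : exists2 c, c <= quantile F p & r < F c.
Proof.
have [ne|empty] := pselect ([set c | p <= F c] !=set0); last first.
  have Ep : [set c | p <= F c] = set0.
    by apply/seteqP; split=> // c le_c; apply: empty; exists c.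
  have E1p : [set c | 1 - p <= F c] = set0.
    by apply/seteqP; split=> // c /upper_level_sub; rewrite Ep.
  by exfalso; apply: quantiles_ne; rewrite /quantile Ep E1p.
have [lb|nlb] := pselect (has_lbound [set c | p <= F c]).
  by exists (quantile F p); rewrite // F_quantile.
have [c le_p_Fc lt_c] := below_of_unbounded (quantile F p) nlb.
by exists c; [exact: ltW | exact: lt_le_trans le_p_Fc].
Qed.

Lemma upper_cutoff : {homo F : x y / x <= y} ->
  exists2 c, quantile F (1 - p) <= c & F c < 1 - r.
Proof.
move=> F_mono; exists (quantile F (1 - p)) => //.
have [ne|empty] := pselect ([set c | 1 - p <= F c] !=set0); last first.
  have low : F (quantile F (1 - p)) < 1 - p.
    by rewrite ltNge; apply/negP => high; apply: empty; exists (quantile F (1 - p)).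
  by apply: lt_trans low _; rewrite ltrD2l ltrN2.
have [lb|nlb] := pselect (has_lbound [set c | 1 - p <= F c]).
  by rewrite F_quantile // ltrD2l ltrN2.
exfalso; apply: quantiles_ne.
have all_high c : 1 - p <= F c.
  apply: contrapT => /negP; rewrite -ltNge => low; apply: nlb; exists c => c' le_c'.
  rewrite leNgt; apply/negP => /ltW /F_mono le_F.
  by have := le_trans le_c' le_F; rewrite leNgt low.
have E1p : [set c | 1 - p <= F c] = setT.
  by apply/seteqP; split=> // c _; exact: all_high.
have Ep : [set c | p <= F c] = setT.
  by apply/seteqP; split=> // c _; exact: upper_level_sub (all_high c).
by rewrite /quantile Ep E1p.
Qed.
End PopulationQuantile.
Arguments lower_cutoff {R F} F_cont {r p}.
Arguments upper_cutoff {R F} F_cont {r p}.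

Lemma eventually_le_of_cvg0 {R : realType} {u : nat -> \bar R} :
  u @ \oo --> 0%E -> forall eps : R, 0 < eps ->
  exists M, forall n, (M <= n)%N -> (u n <= eps%:E)%E.
Proof.
move=> /fine_cvgP[fin_u cvg_u] eps eps_gt0.
have [M _ HM] : \forall n \near \oo, (u n <= eps%:E)%E.
  apply: filterS2 fin_u (cvgr_le _ cvg_u _ eps_gt0) => n fin_un le_eps.
  by rewrite -(fineK fin_un) lee_fin.
by exists M.
Qed.

Section Probability.
Variables (d : measure_display) (Omega : measurableType d) (R : realType).
Variable P : probability Omega R.

Lemma cdf_nondecreasing (X : Omega -> R) (F : R -> R) :
  measurable_fun setT X -> (forall c, P [set w | X w <= c] = (F c)%:E) ->
  {homo F : x y / x <= y}.
Proof.
move=> mX cdfX x y le_xy; rewrite -lee_fin -!cdfX.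
apply: le_measure; rewrite ?inE.
- exact: measurable_le_set (measurable_cst _).
- exact: measurable_le_set (measurable_cst _).
- by move=> w /= /le_trans; apply.
Qed.

(* Assumption 2 forces the two population quantiles used by the test to differ:
   otherwise the event it bounds would be the whole space. *)
Lemma quantiles_distinct (X : Omega -> R) (F : R -> R) (tau : R) :
  0 < tau < 1 ->
  (P [set w | (X w <= quantile F (tau / 2) \/ quantile F (1 - tau / 2) < X w)%R]
     <= tau%:E)%E ->
  quantile F (tau / 2) <> quantile F (1 - tau / 2).
Proof.
move=> /andP[_ tau_lt1] le_tau eq_q; move: le_tau; rewrite eq_q.
rewrite (_ : [set w | _] = setT) ?probability_setT ?lee_fin ?leNgt ?tau_lt1 //.
by apply/seteqP; split=> // w _ /=; case: leP; [left | right].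
Qed.
End Probability.
Arguments cdf_nondecreasing {d Omega R P X F}.
Arguments quantiles_distinct {d Omega R P X F tau}.

Section CentredTest.
Variables (d : measure_display) (Omega : measurableType d) (R : realType).
Variable P : probability Omega R.
Variables (n : nat) (W : 'I_n -> Omega -> R) (Wt : Omega -> R).
Hypotheses (n_gt0 : (0 < n)%N) (mW : forall i, measurable_fun setT (W i))
  (mWt : measurable_fun setT Wt).

Let mean w := n%:R^-1 * \sum_(i < n) W i w.
Let residual w i := W i w - mean w.

(* The test comparing Wt - mean with the quantiles of the centred sample;
   under H0 this is the DID test. *)
Definition centred_rejection (r : R) : set Omega :=
  [set w | let a := Wt w - mean w in let Fh := ecdf (residual w) in
           a <= quantile Fh r \/ quantile Fh (1 - r) < a].

Let measurable_mean : measurable_fun setT mean := measurable_sample_mean mW.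

Lemma centred_rejection_measurable r : 0 < r < 1 -> measurable (centred_rejection r).
Proof.
move=> /andP[r_gt0 r_lt1].
have mres i : measurable_fun setT (residual ^~ i) by exact: measurable_funB.
have mle p : 0 < p -> p <= 1 ->
    measurable [set w | Wt w - mean w <= quantile (ecdf (residual w)) p].
  by move=> p_gt0 p_le1; apply: measurable_le_quantile => //; exact: measurable_funB.
rewrite (_ : centred_rejection r =
    [set w | Wt w - mean w <= quantile (ecdf (residual w)) r]
    `|` ~` [set w | Wt w - mean w <= quantile (ecdf (residual w)) (1 - r)]).
  by apply: measurableU; [|apply: measurableC]; apply: mle; lra.
apply/seteqP; split=> w /= [?|?];
  by [left | right; apply/negP; rewrite -ltNge | left | right; rewrite ltNge; apply/negP].
Qed.

Lemma centred_rejection_sub r c1 c2 : 0 < r < 1 ->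
  centred_rejection r `<=` [set w | Wt w <= c1 \/ c2 < Wt w]
    `|` [set w | ecdf (W ^~ w) c1 < r] `|` [set w | 1 - r <= ecdf (W ^~ w) c2].
Proof.
move=> /andP[r_gt0 r_lt1] w reject; apply: contrapT => outside.
have q1_le : quantile (ecdf (residual w)) r <= c1 - mean w.
  apply: (quantile_ecdf_le r_gt0); rewrite ecdf_shift leNgt.
  by apply/negP => ?; apply: outside; left; right.
have le_q2 : c2 - mean w <= quantile (ecdf (residual w)) (1 - r).
  apply: (le_quantile_ecdf n_gt0); first lra.
  by rewrite ecdf_shift ltNge; apply/negP => ?; apply: outside; right.
by apply: outside; left; left; case: reject => /= ?; [left | right]; lra.
Qed.

Lemma centred_rejection_le (F : R -> R) (r c1 c2 q1 q2 : R) : 0 < r < 1 ->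
  c1 <= q1 -> q2 <= c2 ->
  (P (centred_rejection r) <=
     P [set w | (Wt w <= q1 \/ q2 < Wt w)%R]
     + P [set w | (F c1 - r <= `|ecdf (W ^~ w) c1 - F c1|)%R]
     + P [set w | (1 - r - F c2 <= `|ecdf (W ^~ w) c2 - F c2|)%R])%E.
Proof.
move=> r_bounds le_c1 le_c2.
set A := [set w | _ \/ _]; set B1 := [set w | F c1 - r <= _].
set B2 := [set w | _ - F c2 <= _].
have mA : measurable A.
  apply: measurableU; first exact: measurable_le_set (measurable_cst _).
  exact: measurable_lt_set (measurable_cst _) mWt.
have mB c e : measurable [set w | e <= `|ecdf (W ^~ w) c - F c|].
  apply: measurable_le_set; first exact: measurable_cst.
  apply: measurableT_comp; first exact: normr_measurable.
  by apply: measurable_funB; [exact: measurable_ecdf | exact: measurable_cst].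
have sub : centred_rejection r `<=` A `|` B1 `|` B2.
  move=> w /(centred_rejection_sub r c1 c2 r_bounds) [[[le|lt]|/= low]|/= high].
  - by left; left; left; exact: le_trans le_c1.
  - by left; left; right; exact: le_lt_trans lt.
  - by left; right; rewrite /B1 /= distrC; apply: le_trans (ler_norm _); lra.
  - by right; rewrite /B2 /=; apply: le_trans (ler_norm _); lra.
have mAB1 : measurable (A `|` B1) := measurableU _ _ mA (mB _ _).
apply: le_trans (le_measure _ _ _ sub) _; rewrite ?inE.
- exact: centred_rejection_measurable.
- exact: measurableU mAB1 (mB _ _).
apply: le_trans (measureU2 _ mAB1 (mB _ _)) _.
by apply: leeD (measureU2 _ mA (mB _ _)) (lexx _).
Qed.
End CentredTest.
Arguments centred_rejection {d Omega R n} W Wt r.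
Arguments centred_rejection_le {d Omega R} P {n W Wt} n_gt0 mW mWt F {r c1 c2 q1 q2}.

Section DIDTest.
Variables (d : measure_display) (Omega : measurableType d) (R : realType).
Variables (N1 T tstar : nat).
Hypotheses (N1_gt0 : (0 < N1)%N) (tstar_gt0 : (0 < tstar)%N)
  (tstar_ltT : (tstar < T)%N).
Variables (theta1 : 'I_N1 -> R) (theta0 : nat -> R) (gamma : 'I_T -> R)
  (alpha : 'I_N1 -> 'I_T -> R)
  (eta1 : 'I_N1 -> 'I_T -> Omega -> R) (eta0 : nat -> 'I_T -> Omega -> R).

Lemma F_hat_centred N0 w : (0 < N0)%N ->
  F_hat tstar theta0 gamma eta0 N0 w =
  ecdf (fun i : 'I_N0 => Wof tstar (eta0 i) w
                         - N0%:R^-1 * \sum_(j < N0) Wof tstar (eta0 j) w).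
Proof.
by move=> N0_gt0; apply/funext => c; rewrite /F_hat /ecdf;
  under eq_bigr do rewrite W_hat_centred //.
Qed.

Lemma DID_rejection_event N0 alpha0 r : (0 < N0)%N -> ATT tstar alpha = alpha0 ->
  [set w | (let a := alpha_hat tstar theta1 theta0 gamma alpha eta1 eta0 N0 w - alpha0 in
            let Fh := F_hat tstar theta0 gamma eta0 N0 w in
            a <= quantile Fh r \/ quantile Fh (1 - r) < a)%R] =
  centred_rejection (fun i : 'I_N0 => Wof tstar (eta0 i))
    (fun w => N1%:R^-1 * \sum_(i < N1) Wof tstar (eta1 i) w) r.
Proof.
move=> N0_gt0 <-; apply/seteqP; split=> w /=;
  by rewrite alpha_hat_error // F_hat_centred.
Qed.
End DIDTest.
Arguments DID_rejection_event {d Omega R N1 T tstar} N1_gt0 tstar_gt0 tstar_ltT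
  {theta1 theta0 gamma alpha eta1 eta0 N0 alpha0 r}.

Section AsymptoticLevel.
Variables (d : measure_display) (Omega : measurableType d) (R : realType).
Variable P : probability Omega R.
Variables (W0 : nat -> Omega -> R) (Wt : Omega -> R) (F : R -> R).
Hypotheses (mW0 : forall i, measurable_fun setT (W0 i))
  (mWt : measurable_fun setT Wt)
  (F_cont : continuous F) (F_mono : {homo F : x y / x <= y}).
Hypothesis cdf_lln : forall c e : R, 0 < e ->
  (fun N0 : nat => P [set w | e <= `|ecdf (fun i : 'I_N0 => W0 i w) c - F c|])
  @ \oo --> 0%E.
Hypothesis level : forall tau : R, 0 < tau < 1 ->
  (P [set w | (Wt w <= quantile F (tau / 2) \/ quantile F (1 - tau / 2) < Wt w)%R]
   <= tau%:E)%E.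

(* The centred test is asymptotically of level tau as the number of controls
   grows: test at the wider level tau' = tau + e'/2 and spend e'/4 on each of
   the two deviations of the sample cdf at the cutoffs. *)
Lemma centred_test_asymptotic_level (tau e : R) : 0 < tau < 1 -> 0 < e ->
  exists M : nat, forall N0 : nat, (M <= N0)%N ->
    (P (centred_rejection (fun i : 'I_N0 => W0 i) Wt (tau / 2)) <= (tau + e)%:E)%E.
Proof.
move=> /andP[tau_gt0 tau_lt1] e_gt0.
pose e' := Num.min e (1 - tau); pose tau' := tau + e' / 2.
have [e'_gt0 e'_le_e e'_le] : [/\ 0 < e', e' <= e & e' <= 1 - tau].
  by rewrite lt_min e_gt0 subr_gt0 tau_lt1 !ge_min !lexx ?orbT.
have tau'_bounds : 0 < tau' < 1 by apply/andP; split; rewrite /tau'; lra.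
have [r_lt_p p_lt_1p] : tau / 2 < tau' / 2 /\ tau' / 2 < 1 - tau' / 2.
  by split; rewrite /tau'; lra.
have distinct := quantiles_distinct tau'_bounds (level _ tau'_bounds).
have [c1 c1_le F_c1] := lower_cutoff F_cont r_lt_p p_lt_1p distinct.
have [c2 le_c2 F_c2] := upper_cutoff F_cont r_lt_p p_lt_1p distinct F_mono.
clear distinct. (* lra below cannot use a disequality hypothesis *)
have gap1 : 0 < F c1 - tau / 2 by rewrite subr_gt0.
have gap2 : 0 < 1 - tau / 2 - F c2 by rewrite subr_gt0.
have e'4_gt0 : 0 < e' / 4 by rewrite divr_gt0.
have [M1 B1_small] := eventually_le_of_cvg0 (cdf_lln c1 _ gap1) _ e'4_gt0.
have [M2 B2_small] := eventually_le_of_cvg0 (cdf_lln c2 _ gap2) _ e'4_gt0.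
exists (maxn 1 (maxn M1 M2)) => N0.
rewrite !geq_max => /and3P[N0_gt0 /B1_small B1_le /B2_small B2_le].
have tau2_bounds : 0 < tau / 2 < 1 by apply/andP; split; lra.
apply: le_trans (centred_rejection_le P N0_gt0 (fun i => mW0 i) mWt F
  tau2_bounds c1_le le_c2) _.
apply: le_trans (leeD (leeD (level _ tau'_bounds) B1_le) B2_le) _.
by rewrite -!EFinD lee_fin /tau'; lra.
Qed.
End AsymptoticLevel.
Arguments centred_test_asymptotic_level {d Omega R P W0 Wt F}
  mW0 mWt F_cont F_mono cdf_lln level {tau e}.

Theorem proposition2
  (R : realType) (d : measure_display) (Omega : measurableType d)
  (P : probability Omega R)
  (N1 T tstar : nat) (hN1 : (1 <= N1)%N) (htstar0 : (0 < tstar)%N)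
  (htstarT : (tstar < T)%N)
  (theta1 : 'I_N1 -> R) (theta0 : nat -> R) (gamma : 'I_T -> R)
  (alpha : 'I_N1 -> 'I_T -> R)
  (eta1 : 'I_N1 -> 'I_T -> Omega -> R) (eta0 : nat -> 'I_T -> Omega -> R)
  (meas1 : forall i t, measurable_fun setT (eta1 i t))
  (meas0 : forall i t, measurable_fun setT (eta0 i t))
  (F : R -> R)
  (* Assumption 1 (i): mean zero *)
  (A1i_1 : forall i, ('E_P[Wof tstar (eta1 i)] = 0)%E)
  (A1i_0 : forall i, ('E_P[Wof tstar (eta0 i)] = 0)%E)
  (* Assumption 1 (ii): common marginal with continuous cdf F, finite
     second moment *)
  (A1ii_F : continuous F)
  (A1ii_1 : forall i c, P [set w | Wof tstar (eta1 i) w <= c] = (F c)%:E)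
  (A1ii_0 : forall i c, P [set w | Wof tstar (eta0 i) w <= c] = (F c)%:E)
  (A1ii_m1 : forall i,
     P.-integrable setT (fun w => ((Wof tstar (eta1 i) w) ^+ 2)%:E))
  (A1ii_m0 : forall i,
     P.-integrable setT (fun w => ((Wof tstar (eta0 i) w) ^+ 2)%:E))
  (* Assumption 1 (iii): laws of large numbers over the controls *)
  (A1iii_mean : forall e : R, 0 < e ->
     (fun N0 : nat => P [set w | e <=
        `| N0%:R^-1 * (\sum_(i < N0) Wof tstar (eta0 i) w) |])
     @ \oo --> 0%E)
  (A1iii_cdf : forall (c e : R), 0 < e ->
     (fun N0 : nat => P [set w | e <=
        `| N0%:R^-1 * (\sum_(i < N0) ((Wof tstar (eta0 i) w <= c)%R : nat)%:R)
           - F c |])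
     @ \oo --> 0%E)
  (* Assumption 2 *)
  (A2 : forall tau : R, 0 < tau < 1 ->
     (P [set w | (let Wt := N1%:R^-1 * (\sum_(i < N1) Wof tstar (eta1 i) w) in
                Wt <= quantile F (tau / 2) \/
                quantile F (1 - tau / 2) < Wt)%R] <= tau%:E)%E)
  (* the null hypothesis H0 : alpha = alpha0 *)
  (alpha0 : R) (H0 : ATT tstar alpha = alpha0) :
  forall tau : R, 0 < tau < 1 ->
  forall e : R, 0 < e ->
  exists M : nat, forall N0 : nat, (M <= N0)%N ->
    (P [set w | (
       let a := alpha_hat tstar theta1 theta0 gamma alpha eta1 eta0 N0 w
                - alpha0 in
       let Fh := F_hat tstar theta0 gamma eta0 N0 w in
       a <= quantile Fh (tau / 2) \/ quantile Fh (1 - tau / 2) < a)%R]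
    <= (tau + e)%:E)%E.
Proof.
move=> tau tau_bounds e e_gt0.
have mW0 i : measurable_fun setT (Wof tstar (eta0 i)) := measurable_Wof tstar (meas0 i).
have mWt := measurable_sample_mean (fun i => measurable_Wof tstar (meas1 i)).
have [M small] := centred_test_asymptotic_level mW0 mWt A1ii_F
  (cdf_nondecreasing (mW0 0%N) (A1ii_0 0%N)) A1iii_cdf A2 tau_bounds e_gt0.
exists (maxn 1 M) => N0; rewrite geq_max => /andP[N0_gt0 /small].
by rewrite (DID_rejection_event hN1 htstar0 htstarT N0_gt0 H0).
Qed.
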